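(* If two trees $T$ and $T'$ have the same subdivision of $[0,1]$ into leaf intervals, then $T'$ can be obtained from $T$ by a finite sequence of basic moves.
   Context: Let $\tau=(\sqrt5-1)/2$, so $\tau^2+\tau=1$. A tree is a finite rooted binary tree whose carets (non-leaf vertex with its two children) are each labelled $x$-type or $y$-type. Vertices correspond to subintervals of $[0,1]$: the root to $[0,1]$; if a vertex corresponds to $[p,p+\tau^k]$, an $x$-type caret there gives children $[p,p+\tau^{k+2}]$ (left) and $[p+\tau^{k+2},p+\tau^k]$ (right), and a $y$-type caret gives $[p,p+\tau^{k+1}]$ (left) and $[p+\tau^{k+1},p+\tau^k]$ (right). The subdivision of a tree is the decomposition of $[0,1]$ into the intervals of its leaves. A basic move replaces, at some vertex of a tree, an $x$-type caret whose right child carries an $x$-type caret by a $y$-type caret whose left child carries a $y$-type caret (keeping the three subtrees hanging below, in the same left-to-right order), or performs the reverse replacement. *)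

From Stdlib Require Import Reals List Relations.
Import ListNotations.
Open Scope R_scope.

(* tau = (sqrt 5 - 1)/2, so tau^2 + tau = 1 *)
Definition tau : R := (sqrt 5 - 1) / 2.

Inductive caret := XC | YC.

Inductive tree := Leaf | Node (c : caret) (l r : tree).

(* leaf intervals, left to right, as (left endpoint, right endpoint),
   for a tree hanging at a vertex with interval [p, p + tau^k] *)
Fixpoint leaf_intervals (t : tree) (p : R) (k : nat) : list (R * R) :=
  match t with
  | Leaf => [(p, p + tau ^ k)]
  | Node XC l r =>
      leaf_intervals l p (k + 2) ++ leaf_intervals r (p + tau ^ (k + 2)) (k + 1)
  | Node YC l r =>
      leaf_intervals l p (k + 1) ++ leaf_intervals r (p + tau ^ (k + 1)) (k + 2)
  end.

Definition tree_subdivision (t : tree) : list (R * R) := leaf_intervals t 0 0.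

Inductive basic_move : tree -> tree -> Prop :=
| bm_xy (A B C : tree) :
    basic_move (Node XC A (Node XC B C)) (Node YC (Node YC A B) C)
| bm_yx (A B C : tree) :
    basic_move (Node YC (Node YC A B) C) (Node XC A (Node XC B C))
| bm_left (c : caret) (l l' r : tree) :
    basic_move l l' -> basic_move (Node c l r) (Node c l' r)
| bm_right (c : caret) (l r r' : tree) :
    basic_move r r' -> basic_move (Node c l r) (Node c l r').

(** The subdivision is invariant under basic moves because both sides of a move
    cut [p, p + tau^k] at [p + tau^(k+2)] and [p + tau^(k+1)], which is the
    identity [tau^(k+2) + tau^(k+3) = tau^(k+1)].  Conversely, induct on [T]:
    the root caret [c] of [T] is recorded in the subdivision as the left endpoint
    of the first leaf of its right subtree.  Any tree having that point as a
    breakpoint can be brought, by basic moves that bubble the breakpoint up along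
    the left or right spine, to a tree with root caret [c]; the two trees then
    split their leaf lists at the same point, and the children are handled
    recursively. *)

From Stdlib Require Import Reals List Relations Lra.
Import ListNotations.
Open Scope R_scope.

Local Notation moves := (clos_refl_trans tree basic_move).

Lemma tau_sq_add : tau * tau + tau = 1.
Proof.
  unfold tau.
  assert (sqrt 5 * sqrt 5 = 5) by (apply sqrt_sqrt; lra).
  nra.
Qed.

Lemma tau_pos : 0 < tau.
Proof.
  unfold tau.
  assert (sqrt 5 * sqrt 5 = 5) by (apply sqrt_sqrt; lra).
  pose proof (sqrt_pos 5).
  nra.
Qed.

Lemma tau_pow_pos (k : nat) : 0 < tau ^ k.
Proof. exact (pow_lt _ _ tau_pos). Qed.

Lemma tau_pow_add2_add1 (k : nat) : tau ^ (k + 2) + tau ^ (k + 1) = tau ^ k.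
Proof.
  rewrite !pow_add; simpl.
  transitivity (tau ^ k * (tau * tau + tau)); [ring |].
  rewrite tau_sq_add; ring.
Qed.

Definition left_level (c : caret) (k : nat) : nat :=
  match c with XC => k + 2 | YC => k + 1 end%nat.

Definition right_level (c : caret) (k : nat) : nat :=
  match c with XC => k + 1 | YC => k + 2 end%nat.

Definition split_point (c : caret) (p : R) (k : nat) : R := p + tau ^ left_level c k.

Lemma leaf_intervals_Node (c : caret) (l r : tree) (p : R) (k : nat) :
  leaf_intervals (Node c l r) p k =
  leaf_intervals l p (left_level c k) ++
  leaf_intervals r (split_point c p k) (right_level c k).
Proof. now destruct c. Qed.

Lemma split_point_gt (c : caret) (p : R) (k : nat) : p < split_point c p k.
Proof. unfold split_point. pose proof (tau_pow_pos (left_level c k)). lra. Qed.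

Lemma split_point_add_right_level (c : caret) (p : R) (k : nat) :
  split_point c p k + tau ^ right_level c k = p + tau ^ k.
Proof.
  unfold split_point; rewrite <- (tau_pow_add2_add1 k).
  destruct c; simpl; ring.
Qed.

Lemma split_point_YC_succ (p : R) (k : nat) :
  split_point YC p (k + 1) = split_point XC p k.
Proof. unfold split_point; simpl. now rewrite <- Nat.add_assoc. Qed.

Lemma split_point_XC_XC (p : R) (k : nat) :
  split_point XC (split_point XC p k) (k + 1) = split_point YC p k.
Proof.
  unfold split_point; simpl.
  rewrite <- (tau_pow_add2_add1 (k + 1)), <- !Nat.add_assoc; simpl.
  ring.
Qed.

Lemma split_point_XC_lt_YC (p : R) (k : nat) :
  split_point XC p k < split_point YC p k.
Proof.
  rewrite <- split_point_XC_XC. apply split_point_gt.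
Qed.

Lemma leaf_intervals_bounds (t : tree) (p : R) (k : nat) (a b : R) :
  In (a, b) (leaf_intervals t p k) -> p <= a /\ a < b /\ b <= p + tau ^ k.
Proof.
  revert p k; induction t as [| c l IHl r IHr]; intros p k H.
  - destruct H as [[= <- <-] | []].
    pose proof (tau_pow_pos k); lra.
  - rewrite leaf_intervals_Node in H.
    pose proof (split_point_gt c p k).
    pose proof (split_point_add_right_level c p k).
    pose proof (tau_pow_pos (right_level c k)).
    unfold split_point in *.
    apply in_app_or in H as [H | H]; [apply IHl in H | apply IHr in H]; lra.
Qed.

Lemma leaf_intervals_head (t : tree) (p : R) (k : nat) :
  exists b rest, leaf_intervals t p k = (p, b) :: rest.
Proof.
  revert p k; induction t as [| c l IHl r _]; intros p k.
  - now exists (p + tau ^ k), [].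
  - destruct (IHl p (left_level c k)) as (b & rest & E).
    rewrite leaf_intervals_Node, E. now eexists b, _.
Qed.

Lemma basic_move_leaf_intervals (t t' : tree) :
  basic_move t t' -> forall p k, leaf_intervals t p k = leaf_intervals t' p k.
Proof.
  assert (Hrot : forall A B C p k,
    leaf_intervals (Node XC A (Node XC B C)) p k =
    leaf_intervals (Node YC (Node YC A B) C) p k).
  { intros A B C p k. rewrite !leaf_intervals_Node, <- app_assoc.
    cbn [left_level right_level].
    rewrite split_point_XC_XC, split_point_YC_succ, <- !Nat.add_assoc.
    reflexivity. }
  induction 1 as [A B C | A B C | c l l' r _ IH | c l r r' _ IH]; intros p k.
  - apply Hrot.
  - symmetry; apply Hrot.
  - now rewrite !leaf_intervals_Node, IH.
  - now rewrite !leaf_intervals_Node, IH.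
Qed.

Lemma moves_leaf_intervals (t t' : tree) :
  moves t t' -> forall p k, leaf_intervals t p k = leaf_intervals t' p k.
Proof.
  induction 1; intros p k; eauto using basic_move_leaf_intervals, eq_trans.
Qed.

Lemma moves_map (f : tree -> tree) :
  (forall t t', basic_move t t' -> basic_move (f t) (f t')) ->
  forall t t', moves t t' -> moves (f t) (f t').
Proof. induction 2; eauto using rt_step, rt_refl, rt_trans. Qed.

Lemma moves_Node (c : caret) (l l' r r' : tree) :
  moves l l' -> moves r r' -> moves (Node c l r) (Node c l' r').
Proof.
  intros Hl Hr. apply rt_trans with (Node c l' r).
  - exact (moves_map (fun x => Node c x r) (fun x y => bm_left c x y r) _ _ Hl).
  - exact (moves_map (Node c l') (bm_right c l') _ _ Hr).
Qed.

Lemma moves_to_root_caret (t : tree) (c : caret) (p : R) (k : nat) (b : R) :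
  In (split_point c p k, b) (leaf_intervals t p k) ->
  exists l r, moves (Node c l r) t.
Proof.
  revert c p k; induction t as [| c' A IHA B IHB]; intros c p k H.
  - destruct H as [[= H _] | []].
    pose proof (split_point_gt c p k); lra.
  - destruct c, c'; try solve [eauto using rt_refl].
    + rewrite leaf_intervals_Node in H.
      apply in_app_or in H as [H | H].
      * rewrite <- split_point_YC_succ in H.
        destruct (IHA _ _ _ H) as (A1 & A2 & HA).
        exists A1, (Node XC A2 B).
        eapply rt_trans; [apply rt_step, bm_xy |].
        exact (moves_Node YC _ _ _ _ HA (rt_refl _ _ _)).
      * apply leaf_intervals_bounds in H.
        pose proof (split_point_XC_lt_YC p k); lra.
    + rewrite leaf_intervals_Node in H.
      apply in_app_or in H as [H | H].
      * apply leaf_intervals_bounds in H.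
        pose proof (split_point_XC_lt_YC p k); unfold split_point in *; simpl in *; lra.
      * rewrite <- split_point_XC_XC in H.
        destruct (IHB _ _ _ H) as (B1 & B2 & HB).
        exists (Node YC A B1), B2.
        eapply rt_trans; [apply rt_step, bm_yx |].
        exact (moves_Node XC _ _ _ _ (rt_refl _ _ _) HB).
Qed.

Lemma app_inj_separated {A : Type} (P : A -> Prop) (L1 L2 L1' L2' : list A) :
  (forall x, In x L1 -> P x) -> (forall x, In x L1' -> P x) ->
  (forall x, In x L2 -> ~ P x) -> (forall x, In x L2' -> ~ P x) ->
  L1 ++ L2 = L1' ++ L2' -> L1 = L1' /\ L2 = L2'.
Proof.
  revert L1'; induction L1 as [| a L1 IH]; intros [| a' L1'] H1 H1' H2 H2' E;
    simpl in E.
  - auto.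
  - exfalso. apply (H2 a'); [rewrite E; left |apply H1']; auto using in_eq.
  - exfalso. apply (H2' a); [rewrite <- E; left |apply H1]; auto using in_eq.
  - injection E as <- E.
    destruct (IH L1') as [-> ->]; auto using in_cons.
Qed.

Lemma moves_of_leaf_intervals_eq (T T' : tree) (p : R) (k : nat) :
  leaf_intervals T p k = leaf_intervals T' p k -> moves T T'.
Proof.
  revert T' p k; induction T as [| c l IHl r IHr]; intros T' p k E.
  - destruct T' as [| c l r]; [apply rt_refl | exfalso].
    rewrite leaf_intervals_Node in E; symmetry in E.
    destruct (leaf_intervals_head l p (left_level c k)) as (b & L & El).
    destruct (leaf_intervals_head r (split_point c p k) (right_level c k)) as (b' & L' & Er).
    rewrite El, Er in E.
    apply app_eq_unit in E as [[? _] | [_ ?]]; discriminate.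
  - destruct (leaf_intervals_head r (split_point c p k) (right_level c k)) as (b & L & Er).
    assert (Hs : In (split_point c p k, b) (leaf_intervals T' p k)).
    { rewrite <- E, leaf_intervals_Node, Er. apply in_or_app; right; apply in_eq. }
    destruct (moves_to_root_caret _ _ _ _ _ Hs) as (l' & r' & HT').
    apply rt_trans with (Node c l' r'); [| exact HT'].
    rewrite <- (moves_leaf_intervals _ _ HT'), !leaf_intervals_Node in E.
    pose proof (split_point_add_right_level c p k).
    pose proof (tau_pow_pos (right_level c k)).
    (* Left leaves end at or before the cut, right leaves start at it. *)
    apply (app_inj_separated (fun x => snd x <= split_point c p k)) in E as [El Er'];
      try (intros [a b'] Hab; apply leaf_intervals_bounds in Hab;
           unfold split_point in *; simpl; lra).
    apply moves_Node; eauto.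
Qed.

Theorem mainTheorem15 (T T' : tree) :
  tree_subdivision T = tree_subdivision T' ->
  clos_refl_trans tree basic_move T T'.
Proof. exact (moves_of_leaf_intervals_eq T T' 0 0). Qed.
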